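(* Let $\mathcal{O}$ be a strict monoidal category and $\mathcal{B}$ a strict left $\mathcal{O}$-module category. Then the category $\bar{\mathcal{O}}_{\triangleright\mathcal{B}}$ is a monoidal category with respect to the tensor product equal to that of $\mathcal{O}$ on objects and defined on morphisms by $$(\phi\bar\otimes\psi)_X:=(\mathrm{id}_C\otimes\psi_X)\circ\phi_{B\otimes X}=\phi_{D\otimes X}\circ(\mathrm{id}_A\otimes\psi_X)$$ for $\phi\in\mathrm{Hom}_{\bar{\mathcal{O}}_{\triangleright\mathcal{B}}}(A,C)$, $\psi\in\mathrm{Hom}_{\bar{\mathcal{O}}_{\triangleright\mathcal{B}}}(B,D)$, $X\in\mathrm{Ob}\,\mathcal{B}$.
   Context: The action of $\mathcal{O}$ on $\mathcal{B}$ and the tensor product of $\mathcal{O}$ are both written $\otimes$ (with trivial associativity constraints). $\bar{\mathcal{O}}_{\triangleright\mathcal{B}}$ has the objects of $\mathcal{O}$; a morphism $\phi\colon A\to B$ is a family $\{\phi_X\}_{X\in\mathrm{Ob}\,\mathcal{B}}$ of morphisms $\phi_X\in\mathrm{Hom}_\mathcal{B}(A\otimes X,B\otimes X)$ such that $\phi_X\circ(\mathrm{id}_A\otimes\xi)=(\mathrm{id}_B\otimes\xi)\circ\phi_{X'}$ for all $\xi\in\mathrm{Hom}_\mathcal{B}(X',X)$; composition is pointwise, $(\phi\circ\psi)_X=\phi_X\circ\psi_X$. *)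

From Stdlib Require Import FunctionalExtensionality ProofIrrelevance.
Set Implicit Arguments.
Unset Strict Implicit.

(** Categories with Leibniz equality of morphisms; [comp g f] is g ∘ f. *)
Record Category := {
  Ob :> Type;
  Hom : Ob -> Ob -> Type;
  idm : forall A, Hom A A;
  comp : forall A B C, Hom B C -> Hom A B -> Hom A C;
  comp_id_l : forall A B (f : Hom A B), comp (idm B) f = f;
  comp_id_r : forall A B (f : Hom A B), comp f (idm A) = f;
  comp_assoc : forall A B C D (h : Hom C D) (g : Hom B C) (f : Hom A B),
      comp h (comp g f) = comp (comp h g) f }.
Arguments Hom {c} _ _.
Arguments idm {c} _.
Arguments comp {c A B C} _ _.

Definition cast_hom (C : Category) (A A' B B' : Ob C) (eA : A = A') (eB : B = B')
  (f : Hom A B) : Hom A' B' :=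
  match eA in _ = a, eB in _ = b return Hom a b with eq_refl, eq_refl => f end.

Record IsStrictMonoidal (C : Category) (tob : C -> C -> C) (I : C)
  (tmor : forall A B A' B' : C, Hom A A' -> Hom B B' -> Hom (tob A B) (tob A' B')) : Prop := {
  tmor_id : forall A B : C, tmor _ _ _ _ (idm A) (idm B) = idm (tob A B);
  tmor_comp : forall (A1 A2 A3 B1 B2 B3 : C) (f : Hom A1 A2) (f' : Hom A2 A3)
      (g : Hom B1 B2) (g' : Hom B2 B3),
      tmor _ _ _ _ (comp f' f) (comp g' g) = comp (tmor _ _ _ _ f' g') (tmor _ _ _ _ f g);
  tob_assoc : forall A B D : C, tob (tob A B) D = tob A (tob B D);
  tob_unit_l : forall A : C, tob I A = A;
  tob_unit_r : forall A : C, tob A I = A;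
  tmor_assoc : forall (A A' B B' D D' : C) (f : Hom A A') (g : Hom B B') (h : Hom D D'),
      tmor _ _ _ _ (tmor _ _ _ _ f g) h =
      cast_hom (eq_sym (tob_assoc A B D)) (eq_sym (tob_assoc A' B' D')) (tmor _ _ _ _ f (tmor _ _ _ _ g h));
  tmor_unit_l : forall (A A' : C) (f : Hom A A'),
      tmor _ _ _ _ (idm I) f = cast_hom (eq_sym (tob_unit_l A)) (eq_sym (tob_unit_l A')) f;
  tmor_unit_r : forall (A A' : C) (f : Hom A A'),
      tmor _ _ _ _ f (idm I) = cast_hom (eq_sym (tob_unit_r A)) (eq_sym (tob_unit_r A')) f }.

Record StrictMonoidalCategory := {
  smc_cat :> Category;
  smc_tob : smc_cat -> smc_cat -> smc_cat;
  smc_I : smc_cat;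
  smc_tmor : forall A B A' B' : smc_cat,
      Hom A A' -> Hom B B' -> Hom (smc_tob A B) (smc_tob A' B');
  smc_ax : @IsStrictMonoidal smc_cat smc_tob smc_I smc_tmor }.
Arguments smc_tob {s} _ _.
Arguments smc_tmor {s A B A' B'} _ _.

Record StrictLeftModule (O : StrictMonoidalCategory) := {
  mod_cat :> Category;
  act_ob : O -> mod_cat -> mod_cat;
  act_mor : forall (A A' : O) (X X' : mod_cat),
      Hom A A' -> Hom X X' -> Hom (act_ob A X) (act_ob A' X');
  act_id : forall (A : O) (X : mod_cat), act_mor (idm A) (idm X) = idm (act_ob A X);
  act_comp : forall (A1 A2 A3 : O) (X1 X2 X3 : mod_cat) (f : Hom A1 A2) (f' : Hom A2 A3)
      (g : Hom X1 X2) (g' : Hom X2 X3),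
      act_mor (comp f' f) (comp g' g) = comp (act_mor f' g') (act_mor f g);
  act_assoc_ob : forall (A B : O) (X : mod_cat),
      act_ob (smc_tob A B) X = act_ob A (act_ob B X);
  act_unit_ob : forall X : mod_cat, act_ob (smc_I O) X = X;
  act_assoc_mor : forall (A A' B B' : O) (X X' : mod_cat)
      (f : Hom A A') (g : Hom B B') (h : Hom X X'),
      act_mor (smc_tmor f g) h =
      cast_hom (eq_sym (act_assoc_ob A B X)) (eq_sym (act_assoc_ob A' B' X'))
               (act_mor f (act_mor g h));
  act_unit_mor : forall (X X' : mod_cat) (h : Hom X X'),
      act_mor (idm (smc_I O)) h =
      cast_hom (eq_sym (act_unit_ob X)) (eq_sym (act_unit_ob X')) h }.
Arguments act_ob {O s} _ _.
Arguments act_mor {O s A A' X X'} _ _.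
Arguments act_assoc_ob {O s} _ _ _.

Definition ObarHom (O : StrictMonoidalCategory) (M : StrictLeftModule O) (A C : O) : Type :=
  { phi : forall X : M, Hom (act_ob A X) (act_ob C X) |
    forall (X X' : M) (xi : Hom X' X),
      comp (phi X) (act_mor (idm A) xi) = comp (act_mor (idm C) xi) (phi X') }.

Section Obar.
Variables (O : StrictMonoidalCategory) (M : StrictLeftModule O).

Definition Obar_id (A : O) : ObarHom M A A.
Proof.
  exists (fun X => idm (act_ob A X)).
  intros X X' xi. now rewrite comp_id_l, comp_id_r.
Defined.

Definition Obar_comp (A B C : O) (phi : ObarHom M B C) (psi : ObarHom M A B) : ObarHom M A C.
Proof.
  exists (fun X => comp (proj1_sig phi X) (proj1_sig psi X)).
  intros X X' xi.
  rewrite <- comp_assoc, (proj2_sig psi), comp_assoc, (proj2_sig phi), comp_assoc.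
  reflexivity.
Defined.

Lemma ObarHom_eq (A C : O) (phi psi : ObarHom M A C) :
  (forall X, proj1_sig phi X = proj1_sig psi X) -> phi = psi.
Proof.
  destruct phi as [f Hf], psi as [g Hg]; simpl; intro H.
  apply functional_extensionality_dep in H. subst g.
  f_equal. apply proof_irrelevance.
Qed.

Definition Obar : Category.
Proof.
  refine {| Ob := Ob O; Hom := ObarHom M; idm := Obar_id; comp := Obar_comp |}.
  - intros A B f; apply ObarHom_eq; intro X; simpl; apply comp_id_l.
  - intros A B f; apply ObarHom_eq; intro X; simpl; apply comp_id_r.
  - intros A B C D h g f; apply ObarHom_eq; intro X; simpl; apply comp_assoc.
Defined.
End Obar.

(* Naturality of [phi] at the component [psi_X] is exactly the interchange law relating
   the two formulas; the same naturality, with functoriality of [C ▷ -] and strictness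
   of the action, gives naturality of the tensor and each monoidal axiom.  The
   strictness equations hold only up to transport along equalities of objects, so
   morphisms are compared as elements of [{ (a, b) & Hom a b }], where transports
   disappear. *)

From Stdlib Require Import Eqdep.
Set Implicit Arguments.
Unset Strict Implicit.

Definition same_hom (C : Category) (a b a' b' : Ob C) (f : Hom a b) (g : Hom a' b') : Prop :=
  existT (fun p : Ob C * Ob C => Hom (fst p) (snd p)) (a, b) f =
  existT (fun p : Ob C * Ob C => Hom (fst p) (snd p)) (a', b') g.
Arguments same_hom {C a b a' b'} f g.

Infix "=~" := same_hom (at level 70).

Section SameHom.
Variable C : Category.
Implicit Types a b c : Ob C.

Lemma same_hom_of_eq a b (f g : Hom a b) : f = g -> f =~ g.
Proof. intros ->; reflexivity. Qed.

Lemma same_hom_sym a b a' b' (f : Hom a b) (g : Hom a' b') : f =~ g -> g =~ f.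
Proof. unfold same_hom; congruence. Qed.

Lemma same_hom_trans a b a' b' a'' b'' (f : Hom a b) (g : Hom a' b') (h : Hom a'' b'') :
  f =~ g -> g =~ h -> f =~ h.
Proof. unfold same_hom; congruence. Qed.

Lemma same_hom_eq a b (f g : Hom a b) : f =~ g -> f = g.
Proof. exact (@EqdepTheory.inj_pair2 _ _ (a, b) f g). Qed.

Lemma same_hom_ends a b a' b' (f : Hom a b) (g : Hom a' b') : f =~ g -> a = a' /\ b = b'.
Proof.
  intro H. apply (f_equal (@projT1 _ _)) in H. simpl in H. injection H; auto.
Qed.

Lemma same_hom_cast a b a' b' (ea : a = a') (eb : b = b') (f : Hom a b) :
  cast_hom ea eb f =~ f.
Proof. destruct ea, eb; reflexivity. Qed.

Lemma same_hom_idm a a' : a = a' -> idm a =~ idm a'.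
Proof. intros ->; reflexivity. Qed.

Lemma same_hom_comp a b c a' b' c' (g : Hom b c) (f : Hom a b) (g' : Hom b' c') (f' : Hom a' b') :
  g =~ g' -> f =~ f' -> comp g f =~ comp g' f'.
Proof.
  intros Hg Hf.
  destruct (same_hom_ends Hg) as [<- <-], (same_hom_ends Hf) as [<- _].
  apply same_hom_eq in Hg, Hf. subst. reflexivity.
Qed.

End SameHom.

Section Action.
Variables (O : StrictMonoidalCategory) (M : StrictLeftModule O).

Lemma same_hom_act (A A' A2 A2' : O) (X X' X2 X2' : M)
  (f : Hom A A') (f2 : Hom A2 A2') (k : Hom X X') (k2 : Hom X2 X2') :
  f =~ f2 -> k =~ k2 -> act_mor f k =~ act_mor f2 k2.
Proof.
  intros Hf Hk.
  destruct (same_hom_ends Hf) as [<- <-], (same_hom_ends Hk) as [<- <-].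
  apply same_hom_eq in Hf, Hk. subst. reflexivity.
Qed.

Lemma act_mor_idm_comp (A : O) (X Y Z : M) (g : Hom Y Z) (f : Hom X Y) :
  comp (act_mor (idm A) g) (act_mor (idm A) f) = act_mor (idm A) (comp g f).
Proof. rewrite <- act_comp, comp_id_l. reflexivity. Qed.

Lemma act_mor_idm_tob (A B : O) (X X' : M) (xi : Hom X X') :
  act_mor (idm (smc_tob A B)) xi =~ act_mor (idm A) (act_mor (idm B) xi).
Proof. rewrite <- (tmor_id (smc_ax O)), act_assoc_mor. apply same_hom_cast. Qed.

Lemma same_hom_Obar_fam (A C : O) (phi : ObarHom M A C) (Y Y' : M) :
  Y = Y' -> proj1_sig phi Y =~ proj1_sig phi Y'.
Proof. intros ->; reflexivity. Qed.

Lemma same_hom_Obar_cast (A A' C C' : O) (eA : A = A') (eC : C = C')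
  (phi : @Hom (Obar M) A C) (X : M) :
  proj1_sig (@cast_hom (Obar M) A A' C C' eA eC phi) X =~ proj1_sig phi X.
Proof. destruct eA, eC; reflexivity. Qed.

Lemma Obar_interchange (A B C D : O) (phi : ObarHom M A C) (psi : ObarHom M B D) (X : M) :
  comp (act_mor (idm C) (proj1_sig psi X)) (proj1_sig phi (act_ob B X)) =
  comp (proj1_sig phi (act_ob D X)) (act_mor (idm A) (proj1_sig psi X)).
Proof. symmetry. apply (proj2_sig phi). Qed.

End Action.

Section Tensor.
Variables (O : StrictMonoidalCategory) (M : StrictLeftModule O).

Definition Obar_tensor_fam (A B C D : O) (phi : ObarHom M A C) (psi : ObarHom M B D) (X : M) :
  Hom (act_ob (smc_tob A B) X) (act_ob (smc_tob C D) X) :=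
  cast_hom (eq_sym (act_assoc_ob A B X)) (eq_sym (act_assoc_ob C D X))
    (comp (act_mor (idm C) (proj1_sig psi X)) (proj1_sig phi (act_ob B X))).

Lemma Obar_tensor_fam_uncast (A B C D : O) (phi : ObarHom M A C) (psi : ObarHom M B D) (X : M) :
  Obar_tensor_fam phi psi X =~
  comp (act_mor (idm C) (proj1_sig psi X)) (proj1_sig phi (act_ob B X)).
Proof. apply same_hom_cast. Qed.

Lemma Obar_tensor_fam_natural (A B C D : O) (phi : ObarHom M A C) (psi : ObarHom M B D)
  (X X' : M) (xi : Hom X' X) :
  comp (Obar_tensor_fam phi psi X) (act_mor (idm (smc_tob A B)) xi) =
  comp (act_mor (idm (smc_tob C D)) xi) (Obar_tensor_fam phi psi X').
Proof.
  apply same_hom_eq.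
  eapply same_hom_trans.
  { apply same_hom_comp; [apply Obar_tensor_fam_uncast | apply act_mor_idm_tob]. }
  eapply same_hom_trans.
  2:{ apply same_hom_sym, same_hom_comp; [apply act_mor_idm_tob | apply Obar_tensor_fam_uncast]. }
  apply same_hom_of_eq.
  rewrite <- comp_assoc, (proj2_sig phi), comp_assoc, act_mor_idm_comp, (proj2_sig psi).
  rewrite <- act_mor_idm_comp, comp_assoc. reflexivity.
Qed.

Definition Obar_tensor (A B C D : Obar M) (phi : @Hom (Obar M) A C) (psi : @Hom (Obar M) B D) :
  @Hom (Obar M) (smc_tob A B) (smc_tob C D) :=
  exist _ (Obar_tensor_fam phi psi) (Obar_tensor_fam_natural phi psi).

Lemma Obar_tensor_id (A B : Obar M) :
  Obar_tensor (@idm (Obar M) A) (@idm (Obar M) B) = @idm (Obar M) (smc_tob A B).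
Proof.
  apply ObarHom_eq. intro X. apply same_hom_eq.
  eapply same_hom_trans; [apply Obar_tensor_fam_uncast |]. simpl.
  rewrite act_id, comp_id_r. apply same_hom_idm. symmetry. apply act_assoc_ob.
Qed.

Lemma Obar_tensor_comp (A1 A2 A3 B1 B2 B3 : Obar M)
  (f : @Hom (Obar M) A1 A2) (f' : @Hom (Obar M) A2 A3)
  (g : @Hom (Obar M) B1 B2) (g' : @Hom (Obar M) B2 B3) :
  Obar_tensor (comp f' f) (comp g' g) = comp (Obar_tensor f' g') (Obar_tensor f g).
Proof.
  apply ObarHom_eq. intro X. apply same_hom_eq.
  eapply same_hom_trans; [apply Obar_tensor_fam_uncast |].
  eapply same_hom_trans.
  2:{ apply same_hom_sym, same_hom_comp; apply Obar_tensor_fam_uncast. }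
  apply same_hom_of_eq. simpl.
  rewrite <- act_mor_idm_comp, <- !comp_assoc. f_equal.
  rewrite !comp_assoc. f_equal.
  symmetry. apply (proj2_sig f').
Qed.

Lemma Obar_tensor_assoc (A A' B B' D D' : Obar M) (f : @Hom (Obar M) A A')
  (g : @Hom (Obar M) B B') (h : @Hom (Obar M) D D') :
  Obar_tensor (Obar_tensor f g) h =
  @cast_hom (Obar M) _ _ _ _
    (eq_sym (tob_assoc (smc_ax O) A B D)) (eq_sym (tob_assoc (smc_ax O) A' B' D'))
    (Obar_tensor f (Obar_tensor g h)).
Proof.
  apply ObarHom_eq. intro X. apply same_hom_eq.
  eapply same_hom_trans.
  2:{ apply same_hom_sym. eapply same_hom_trans; [apply same_hom_Obar_cast |].
      eapply same_hom_trans; [apply Obar_tensor_fam_uncast |].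
      apply same_hom_comp.
      - apply same_hom_act; [reflexivity | apply Obar_tensor_fam_uncast].
      - apply same_hom_Obar_fam, act_assoc_ob. }
  eapply same_hom_trans; [apply Obar_tensor_fam_uncast |].
  eapply same_hom_trans.
  { apply same_hom_comp; [apply act_mor_idm_tob | apply Obar_tensor_fam_uncast]. }
  apply same_hom_of_eq. simpl.
  rewrite comp_assoc, act_mor_idm_comp. reflexivity.
Qed.

Lemma Obar_tensor_unit_l (A A' : Obar M) (f : @Hom (Obar M) A A') :
  Obar_tensor (@idm (Obar M) (smc_I O)) f =
  @cast_hom (Obar M) _ _ _ _ (eq_sym (tob_unit_l (smc_ax O) A)) (eq_sym (tob_unit_l (smc_ax O) A')) f.
Proof.
  apply ObarHom_eq. intro X. apply same_hom_eq.
  eapply same_hom_trans.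
  2:{ apply same_hom_sym, same_hom_Obar_cast. }
  eapply same_hom_trans; [apply Obar_tensor_fam_uncast |]. simpl.
  rewrite comp_id_r, act_unit_mor. apply same_hom_cast.
Qed.

Lemma Obar_tensor_unit_r (A A' : Obar M) (f : @Hom (Obar M) A A') :
  Obar_tensor f (@idm (Obar M) (smc_I O)) =
  @cast_hom (Obar M) _ _ _ _ (eq_sym (tob_unit_r (smc_ax O) A)) (eq_sym (tob_unit_r (smc_ax O) A')) f.
Proof.
  apply ObarHom_eq. intro X. apply same_hom_eq.
  eapply same_hom_trans.
  2:{ apply same_hom_sym, same_hom_Obar_cast. }
  eapply same_hom_trans; [apply Obar_tensor_fam_uncast |]. simpl.
  rewrite act_id, comp_id_l. apply same_hom_Obar_fam, act_unit_ob.
Qed.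

Lemma Obar_strict_monoidal : @IsStrictMonoidal (Obar M) (@smc_tob O) (smc_I O) Obar_tensor.
Proof.
  exact {| tmor_id := Obar_tensor_id;
           tmor_comp := Obar_tensor_comp;
           tmor_assoc := Obar_tensor_assoc;
           tmor_unit_l := Obar_tensor_unit_l;
           tmor_unit_r := Obar_tensor_unit_r |}.
Qed.

End Tensor.

Theorem proposition4p15 (O : StrictMonoidalCategory) (M : StrictLeftModule O) :
  exists tmor : forall A B C D : Obar M,
      @Hom (Obar M) A C -> @Hom (Obar M) B D ->
      @Hom (Obar M) (smc_tob A B) (smc_tob C D),
    @IsStrictMonoidal (Obar M) (@smc_tob O) (smc_I O) tmor /\
    forall (A B C D : Obar M) (phi : @Hom (Obar M) A C) (psi : @Hom (Obar M) B D) (X : M),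
      proj1_sig (tmor A B C D phi psi) X =
        cast_hom (eq_sym (act_assoc_ob A B X)) (eq_sym (act_assoc_ob C D X))
          (comp (act_mor (@idm O C) (proj1_sig psi X)) (proj1_sig phi (act_ob B X))) /\
      proj1_sig (tmor A B C D phi psi) X =
        cast_hom (eq_sym (act_assoc_ob A B X)) (eq_sym (act_assoc_ob C D X))
          (comp (proj1_sig phi (act_ob D X)) (act_mor (@idm O A) (proj1_sig psi X))).
Proof.
  exists (@Obar_tensor O M). split; [apply Obar_strict_monoidal |].
  intros A B C D phi psi X. split; [reflexivity |].
  simpl. unfold Obar_tensor_fam. rewrite Obar_interchange. reflexivity.
Qed.
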